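(* The restrictions to $L^{(d-1)}$ of the polynomials $\langle v,v\rangle$ and $\langle M^kv,M^kv\rangle$, $1\le k<d$, generate the field $\mathbb C(L^{(d-1)})^{W_d(\mathbb C)}$ of $W_d(\mathbb C)$-invariant rational functions on $L^{(d-1)}$.
   Context: Fix $d\ge2$. $V=\mathbb C^d\oplus\mathfrak{so}(d,\mathbb C)$ has elements $(v,M)$, $v=(c_1,\dots,c_d)^\top$, $M$ complex skew-symmetric with $M_{ij}=c_{ij}=-M_{ji}$ for $i<j$, on which $O_d(\mathbb C)=\{A:AA^\top=I\}$ acts by $(Av,AMA^\top)$. $\langle a,b\rangle=\sum_ia_ib_i$ (bilinear, no conjugation). $L^{(d-1)}\subset V$ is the linear subspace of pairs with $v=(0,\dots,0,c_d)^\top$ and $M$ having only the entries $c_{12},c_{23},\dots,c_{(d-1)d}$ (and their negatives) possibly nonzero. $W_d(\mathbb C)$ is the group of diagonal matrices with diagonal entries in $\{-1,1\}$, acting on $L^{(d-1)}$ by restriction of the action. Generation is as a field over $\mathbb C$. *)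

From mathcomp Require Import all_boot all_order all_algebra.
From mathcomp Require Import reals.
From mathcomp.real_closed Require Import complex.
From mathcomp Require Import mpoly.
Set Implicit Arguments. Unset Strict Implicit. Unset Printing Implicit Defensive.
Import GRing.Theory.
Local Open Scope ring_scope.

(* Coordinates on L^(d-1) are indexed by 'I_d:
     variable 'X_i (i < d-1)  = c_{i+1,i+2}  (0-based i),
     variable 'X_(d-1)        = c_d.
   Polynomial functions on L^(d-1) are {mpoly C[d]}. *)

Section Defs.
Variables (F : idomainType) (d : nat).

(* the generic point (v, M) of L^(d-1) *)
Definition genv : 'cV[{mpoly F[d]}]_d :=
  \col_(i < d) (if i.+1 == d then 'X_i else 0).
Definition genM : 'M[{mpoly F[d]}]_d :=
  \matrix_(i < d, j < d)
    (if j == i.+1 :> nat then 'X_i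
     else if i == j.+1 :> nat then - 'X_j else 0).

Definition bform (a b : 'cV[{mpoly F[d]}]_d) : {mpoly F[d]} :=
  \sum_(i < d) a i 0 * b i 0.

(* restriction of <M^k v, M^k v> to L^(d-1); k = 0 gives <v,v> *)
Definition genpoly (k : nat) : {mpoly F[d]} :=
  let w := iter k (mulmx genM) genv in bform w w.

(* coordinates (c_{12},...,c_{(d-1)d}, c_d) of a pair (v,M) *)
Definition coordL (v : 'cV[{mpoly F[d]}]_d) (M : 'M[{mpoly F[d]}]_d) (i : 'I_d)
  : {mpoly F[d]} :=
  if i.+1 == d then v i 0 else \sum_(j < d | j == i.+1 :> nat) M i j.

(* the element of W_d(C) given by signs s: diag((-1)^(s i)) *)
Definition Wmat (s : {ffun 'I_d -> bool}) : 'M[{mpoly F[d]}]_d :=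
  diag_mx (\row_(i < d) ((-1) ^+ s i)).

Definition Wact (s : {ffun 'I_d -> bool}) (p : {mpoly F[d]}) : {mpoly F[d]} :=
  let A := Wmat s in
  comp_mpoly [tuple coordL (A *m genv) (A *m genM *m A^T) i | i < d] p.

Definition evalgens (P : {mpoly F[d]}) : {mpoly F[d]} :=
  comp_mpoly [tuple genpoly i | i < d] P.

End Defs.

From mathcomp Require Import all_boot all_order all_algebra.
From mathcomp Require Import reals.
From mathcomp.real_closed Require Import complex.
From mathcomp Require Import mpoly.
From mathcomp Require Import ring zify.
Import GRing.Theory.
Set Implicit Arguments. Unset Strict Implicit. Unset Printing Implicit Defensive.
Local Open Scope ring_scope.

(* The element diag(e_1, ..., e_d) of W_d(C) multiplies c_{i,i+1} by e_i e_{i+1}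
   and c_d by e_d, so it acts on L^(d-1) by sign changes of the coordinates, and
   each coordinate can be flipped alone.  Hence invariant polynomials are
   polynomials in the squared coordinates, and an invariant fraction p/q equals
   (p * prod_{s <> 1} s(q)) / prod_s s(q), a quotient of invariant polynomials.
   It remains to reach every squared coordinate.  M^k v vanishes before position
   d-k, its entry there is c_{d-k,d-k+1} ... c_{d-1,d} c_d, and its later entries
   only involve c_d and the c_{j,j+1} with j > d-k.  So <M^k v, M^k v> is the
   square of that monomial plus an invariant polynomial in later coordinates, and
   a downward induction on the position yields all squares. *)

Section DiagonalScaling.
Variables (R : comNzRingType) (n : nat).
Implicit Types (l : 'I_n -> R) (f : {mpoly R[n]}) (m : 'X_{1..n}).

Definition mscale l f := comp_mpoly [tuple l i *: 'X_i | i < n] f.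

Lemma mscale0 l : mscale l 0 = 0. Proof. exact: rmorph0. Qed.
Lemma mscaleD l : {morph mscale l : f g / f + g}. Proof. exact: rmorphD. Qed.
Lemma mscaleB l : {morph mscale l : f g / f - g}. Proof. exact: rmorphB. Qed.
Lemma mscaleM l : {morph mscale l : f g / f * g}. Proof. exact: rmorphM. Qed.
Lemma mscale_sum l I r (P : pred I) (F : I -> {mpoly R[n]}) :
  mscale l (\sum_(i <- r | P i) F i) = \sum_(i <- r | P i) mscale l (F i).
Proof. exact: rmorph_sum. Qed.
Lemma mscale_prod l I r (P : pred I) (F : I -> {mpoly R[n]}) :
  mscale l (\prod_(i <- r | P i) F i) = \prod_(i <- r | P i) mscale l (F i).
Proof. exact: rmorph_prod. Qed.

Definition mweight l m : R := \prod_(i < n) l i ^+ m i.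

Lemma mscaleX l i : mscale l 'X_i = l i *: 'X_i.
Proof. by rewrite /mscale comp_mpolyXU -tnth_nth tnth_mktuple. Qed.

Lemma mscaleZ l c f : mscale l (c *: f) = c *: mscale l f.
Proof. exact: comp_mpolyZ. Qed.

Lemma mscale_mpolyX l m : mscale l 'X_[m] = mweight l m *: 'X_[m].
Proof.
rewrite /mscale comp_mpolyX mpolyXE_id -scaler_prod; apply: eq_bigr => i _.
by rewrite tnth_mktuple exprZn.
Qed.

Lemma mcoeff_mscale l f m : (mscale l f)@_m = mweight l m * f@_m.
Proof.
elim/mpolyind: f => [|c m' p _ _ IH]; first by rewrite mscale0 !mcoeff0 mulr0.
rewrite mscaleD mscaleZ mscale_mpolyX !mcoeffD !mcoeffZ !mcoeffX IH mulrDr.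
by case: eqP => [->|_]; rewrite ?mulr0 ?mulr1 // mulrC.
Qed.

Lemma eq_mscale l l' : l =1 l' -> mscale l =1 mscale l'.
Proof.
move=> ll' f; apply/mpolyP => m; rewrite !mcoeff_mscale /mweight.
by under eq_bigr do rewrite ll'.
Qed.

Lemma mscale1 f : mscale (fun=> 1) f = f.
Proof.
by apply/mpolyP => m; rewrite mcoeff_mscale /mweight big1 ?mul1r // => i _; rewrite expr1n.
Qed.

Lemma mscale_comp l l' f : mscale l (mscale l' f) = mscale (fun i => l i * l' i) f.
Proof.
apply/mpolyP => m; rewrite !mcoeff_mscale mulrA /mweight -big_split /=.
by under [in RHS]eq_bigr do rewrite exprMn.
Qed.

End DiagonalScaling.

Lemma mpolyXU_neq0 (R : nzRingType) n (i : 'I_n) : 'X_i != 0 :> {mpoly R[n]}.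
Proof. by apply/eqP => /(congr1 (@msupp n R)); rewrite msuppX -mpolyC0 msupp0. Qed.

Section DiagonalScalingFixpoints.
Variables (R : idomainType) (n : nat).
Implicit Types (l : 'I_n -> R) (f : {mpoly R[n]}) (m : 'X_{1..n}).

Lemma mweight_fixed l f m : mscale l f = f -> m \in msupp f -> mweight l m = 1.
Proof.
move=> fixf; rewrite mcoeff_msupp => fm_neq0; apply: (mulIf fm_neq0).
by rewrite -mcoeff_mscale fixf mul1r.
Qed.

Definition mzero_below (t : nat) f := mscale (fun i : 'I_n => (t <= i)%:R) f.

Lemma mzero_below0 t : mzero_below t 0 = 0. Proof. exact: mscale0. Qed.
Lemma mzero_belowB t : {morph mzero_below t : f g / f - g}. Proof. exact: mscaleB. Qed.
Lemma mzero_belowM t : {morph mzero_below t : f g / f * g}. Proof. exact: mscaleM. Qed.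
Lemma mzero_below_sum t I r (P : pred I) (F : I -> {mpoly R[n]}) :
  mzero_below t (\sum_(i <- r | P i) F i) = \sum_(i <- r | P i) mzero_below t (F i).
Proof. exact: mscale_sum. Qed.
Lemma mzero_below_prod t I r (P : pred I) (F : I -> {mpoly R[n]}) :
  mzero_below t (\prod_(i <- r | P i) F i) = \prod_(i <- r | P i) mzero_below t (F i).
Proof. exact: mscale_prod. Qed.

Lemma mzero_belowX t (i : 'I_n) : (t <= i)%N -> mzero_below t 'X_i = 'X_i.
Proof. by move=> le_ti; rewrite /mzero_below mscaleX le_ti scale1r. Qed.

Lemma mzero_below_le t t' f : (t' <= t)%N -> mzero_below t f = f -> mzero_below t' f = f.
Proof.
move=> le_t't fixf; rewrite -fixf /mzero_below mscale_comp; apply: eq_mscale => i.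
rewrite -natrM mulnb; case: (leqP t i) => [le_ti|_]; last by rewrite andbF.
by rewrite (leq_trans le_t't le_ti).
Qed.

Lemma msupp_mzero_below t f m (i : 'I_n) :
  mzero_below t f = f -> m \in msupp f -> (i < t)%N -> m i = 0%N.
Proof.
move=> fixf fm lt_it; have := mweight_fixed fixf fm.
rewrite /mweight (bigD1 i) //= leqNgt lt_it expr0n.
by case: eqP => // _; rewrite mul0r => /eqP; rewrite eq_sym oner_eq0.
Qed.

Lemma msupp_flip_fixed_even f (j : 'I_n) m : (2%:R : R) != 0 ->
  mscale (fun i => (-1) ^+ (i == j)) f = f -> m \in msupp f -> ~~ odd (m j).
Proof.
move=> two_neq0 fixf fm; have := mweight_fixed fixf fm.
rewrite /mweight (bigD1 j) //= big1 => [|i /negbTE ->]; last exact: expr1n.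
rewrite eqxx expr1 mulr1 -signr_odd; case: (odd (m j)) => //= /eqP.
by rewrite expr1 -subr_eq0 -opprD oppr_eq0 -mulr2n (negbTE two_neq0).
Qed.

End DiagonalScalingFixpoints.

Section GeneratedField.
Variables (F : idomainType) (d : nat).
Implicit Types f g h : {mpoly F[d]}.

Lemma evalgensC c : evalgens c%:MP = c%:MP :> {mpoly F[d]}.
Proof. exact: comp_mpolyC. Qed.
Lemma evalgensD : {morph @evalgens F d : f g / f + g}. Proof. exact: rmorphD. Qed.
Lemma evalgensN : {morph @evalgens F d : f / - f}. Proof. exact: rmorphN. Qed.
Lemma evalgensM : {morph @evalgens F d : f g / f * g}. Proof. exact: rmorphM. Qed.

Lemma evalgensX (k : 'I_d) : evalgens 'X_k = genpoly F d k.
Proof. by rewrite /evalgens comp_mpolyXU -tnth_nth tnth_mktuple. Qed.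

Definition in_genfield f :=
  exists A B, evalgens B != 0 /\ f * evalgens B = evalgens A.

Lemma genfieldC c : in_genfield c%:MP.
Proof.
exists c%:MP, 1%:MP; rewrite !evalgensC mulr1; split=> //.
by rewrite mpolyC_eq0 oner_eq0.
Qed.

Lemma genfield0 : in_genfield 0. Proof. by rewrite -mpolyC0; apply: genfieldC. Qed.
Lemma genfield1 : in_genfield 1. Proof. by rewrite -mpolyC1; apply: genfieldC. Qed.

Lemma genfield_genpoly (k : 'I_d) : in_genfield (genpoly F d k).
Proof.
exists 'X_k, 1%:MP; rewrite evalgensC mulr1 evalgensX; split=> //.
by rewrite mpolyC_eq0 oner_eq0.
Qed.

Lemma genfieldD f g : in_genfield f -> in_genfield g -> in_genfield (f + g).
Proof.
move=> [A1 [B1 [nz1 e1]]] [A2 [B2 [nz2 e2]]].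
exists (A1 * B2 + A2 * B1), (B1 * B2); rewrite !evalgensM mulf_neq0 //.
by rewrite evalgensD !evalgensM -e1 -e2; split=> //; ring.
Qed.

Lemma genfieldN f : in_genfield f -> in_genfield (- f).
Proof. by move=> [A [B [nz e]]]; exists (- A), B; rewrite evalgensN -e mulNr. Qed.

Lemma genfieldB f g : in_genfield f -> in_genfield g -> in_genfield (f - g).
Proof. by move=> Sf Sg; apply: genfieldD => //; apply: genfieldN. Qed.

Lemma genfieldM f g : in_genfield f -> in_genfield g -> in_genfield (f * g).
Proof.
move=> [A1 [B1 [nz1 e1]]] [A2 [B2 [nz2 e2]]].
exists (A1 * A2), (B1 * B2); rewrite !evalgensM mulf_neq0 // -e1 -e2.
by split=> //; ring.
Qed.

Lemma genfieldX f k : in_genfield f -> in_genfield (f ^+ k).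
Proof.
by move=> Sf; elim: k => [|k IH]; rewrite ?expr0 ?exprS; [apply: genfield1 | apply: genfieldM].
Qed.

Lemma genfield_div f g h :
  in_genfield f -> in_genfield g -> g != 0 -> h * g = f -> in_genfield h.
Proof.
move=> [A1 [B1 [nz1 e1]]] [A2 [B2 [nz2 e2]]] g_neq0 hgf.
have nzA2 : evalgens A2 != 0 by rewrite -e2 mulf_neq0.
exists (B2 * A1), (A2 * B1); rewrite !evalgensM mulf_neq0 // -e1 -e2 -hgf.
by split=> //; ring.
Qed.

Lemma genfield_even f :
  (forall m, m \in msupp f -> forall i, ~~ odd (m i)) ->
  (forall m, m \in msupp f -> forall i, (0 < m i)%N -> in_genfield ('X_i ^+ 2)) ->
  in_genfield f.
Proof.
move=> even_f sq_f; rewrite [f]mpolyE big_seq.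
apply: (big_ind in_genfield genfield0 genfieldD) => m fm.
rewrite -mul_mpolyC mpolyXE_id; apply: genfieldM; first exact: genfieldC.
apply: (big_ind in_genfield genfield1 genfieldM) => i _.
have [->|mi_gt0] := posnP (m i); first by rewrite expr0; apply: genfield1.
rewrite -(odd_double_half (m i)) (negbTE (even_f m fm i)) add0n -mul2n exprM.
exact/genfieldX/(sq_f m fm i).
Qed.

Lemma genfield_ratio p q a b : in_genfield a -> in_genfield b -> b != 0 ->
  p * b = q * a -> exists A B, evalgens B != 0 /\ p * evalgens B = q * evalgens A.
Proof.
move=> [A1 [B1 [nz1 e1]]] [A2 [B2 [nz2 e2]]] b_neq0 pbqa.
have nzA2 : evalgens A2 != 0 by rewrite -e2 mulf_neq0.
exists (A1 * B2), (A2 * B1); rewrite !evalgensM mulf_neq0 // -e1 -e2.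
split=> //; transitivity (p * b * evalgens B2 * evalgens B1); first by ring.
by rewrite pbqa; ring.
Qed.

End GeneratedField.

Lemma sum_ord_eqn (V : nmodType) d (E : 'I_d.+1 -> V) k :
  \sum_(j < d.+1 | (j : nat) == k) E j = if (k < d.+1)%N then E (inord k) else 0.
Proof.
case: ltnP => [lt_kd|le_dk].
  by rewrite (big_pred1 (inord k)) // => j; rewrite /= -(inj_eq val_inj) /= inordK.
rewrite big_pred0 // => j; apply/negbTE; apply: contraTneq le_dk => <-.
by rewrite -ltnNge.
Qed.

Section PowersOfGenericPoint.
Variables (F : idomainType) (n : nat).
Local Notation d := n.+1.
Local Notation P := {mpoly F[d]}.

Definition wvec k : 'cV[P]_d := iter k (mulmx (genM F d)) (genv F d).

Lemma genpoly_wvec k : genpoly F d k = \sum_(i < d) wvec k i 0 ^+ 2.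
Proof. by apply: eq_bigr => i _; rewrite expr2. Qed.

Lemma genM_mulmx (u : 'cV[P]_d) (i : 'I_d) : (genM F d *m u) i 0 =
    (if (i.+1 < d)%N then 'X_i * u (inord i.+1) 0 else 0)
  - (if (0 < i)%N then 'X_(inord i.-1) * u (inord i.-1) 0 else 0).
Proof.
rewrite mxE.
transitivity (\sum_(j < d | (j : nat) == i.+1) ('X_i * u j 0) +
  \sum_(j < d | (j : nat) == i.-1) (if (0 < i)%N then - ('X_j * u j 0) else 0)).
  rewrite !(big_mkcond (fun j : 'I_d => (j : nat) == _)) -big_split.
  apply: eq_bigr => j _ /=; rewrite /genM mxE.
  case: (eqVneq (j : nat) i.+1) => [ji|ji].
    have -> : ((j : nat) == i.-1) = false by apply/negbTE/eqP; lia.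
    by rewrite addr0.
  case: (eqVneq (i : nat) j.+1) => [ij|ij].
    have -> : ((j : nat) == i.-1) by apply/eqP; lia.
    have -> : (0 < i)%N by lia.
    by rewrite add0r mulNr.
  case: (eqVneq (j : nat) i.-1) => [ji'|ji']; last by rewrite addr0 mul0r.
  have -> : (0 < i)%N = false by apply/negbTE; lia.
  by rewrite addr0 mul0r.
rewrite !sum_ord_eqn.
have -> : (i.-1 < d)%N by move: (ltn_ord i); lia.
by case: ifP => _; case: ifP => _; rewrite ?oppr0.
Qed.

Lemma wvec_eq0 k (i : 'I_d) : (i + k < n)%N -> wvec k i 0 = 0.
Proof.
elim: k i => [|k IH] i lt_ikn.
  by rewrite /wvec /= /genv mxE ifF //; apply/negbTE; rewrite eqSS; apply/eqP; lia.
rewrite [wvec _]/= -/(wvec k) genM_mulmx !IH ?mulr0 ?if_same ?subr0 //.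
  by rewrite inordK; move: (ltn_ord i); lia.
by rewrite inordK; lia.
Qed.

Lemma wvec_lead k (i : 'I_d) : (i + k = n)%N -> wvec k i 0 = \prod_(l < d | (i <= l)%N) 'X_l.
Proof.
elim: k i => [|k IH] i ikn.
  rewrite addn0 in ikn; rewrite /wvec /= /genv mxE ikn eqxx (big_pred1 i) // => l /=.
  by rewrite -(inj_eq val_inj) /= eqn_leq ikn; have := ltn_ord l; rewrite ltnS => ->.
rewrite [wvec _]/= -/(wvec k) genM_mulmx ifT; last by lia.
rewrite (wvec_eq0 (i := inord i.-1)); last by rewrite inordK; lia.
rewrite mulr0 if_same subr0 IH; last by rewrite inordK; lia.
rewrite [RHS](bigD1 i) //=; congr (_ * _); apply: eq_bigl => l.
by rewrite inordK; [rewrite -(inj_eq val_inj) /= ltn_neqAle andbC eq_sym | lia].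
Qed.

Lemma wvec_vars_gt k t (j : 'I_d) :
  (t + k = n)%N -> (t < j)%N -> mzero_below t.+1 (wvec k j 0) = wvec k j 0.
Proof.
elim: k t j => [|k IH] t j tkn lt_tj; first by move: (ltn_ord j); lia.
have vars_k (i : 'I_d) : mzero_below t.+1 (wvec k i 0) = wvec k i 0.
  case: (ltngtP i t.+1) => [lt_it|lt_ti|it].
  - by rewrite wvec_eq0 ?mzero_below0 //; lia.
  - by apply: (mzero_below_le (leqnSn _)); apply: IH => //; lia.
  - rewrite wvec_lead ?mzero_below_prod; last by lia.
    by apply: eq_bigr => l; rewrite it; apply: mzero_belowX.
rewrite [wvec _]/= -/(wvec k) genM_mulmx mzero_belowB; congr (_ - _).
  case: ifP => _; last exact: mzero_below0.
  by rewrite mzero_belowM mzero_belowX ?vars_k.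
case: ifP => j_gt0; last exact: mzero_below0.
case: (eqVneq (j : nat) t.+1) => [jt|jt].
  by rewrite wvec_eq0 ?mulr0 ?mzero_below0 // inordK; lia.
move/eqP: jt => jt.
by rewrite mzero_belowM mzero_belowX ?vars_k // inordK; move: (ltn_ord j); lia.
Qed.

End PowersOfGenericPoint.

Section SignAction.
Variables (F : idomainType) (n : nat).
Local Notation d := n.+1.
Local Notation P := {mpoly F[d]}.
Implicit Types (s : {ffun 'I_d -> bool}) (f : P).

(* Extending the sign bits of [s] by [false] beyond [d] makes [wsign s i], the
   factor by which [s] rescales [X_i], equal to e_i e_{i+1} also for [X_n = c_d]. *)
Definition sbit s (k : nat) : bool := (k < d)%N && s (inord k).
Definition esign s (k : nat) : F := (-1) ^+ sbit s k.
Definition wsign s (i : 'I_d) : F := esign s i * esign s i.+1.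

Lemma esign_ord s (i : 'I_d) : esign s i = (-1) ^+ s i.
Proof. by rewrite /esign /sbit ltn_ord inord_val. Qed.

Lemma esign_inord s k : (k < d)%N -> esign s (inord k : 'I_d) = esign s k.
Proof. by move=> lt_kd; rewrite /esign /sbit inordK ?inord_val. Qed.

Lemma esign_out s k : (d <= k)%N -> esign s k = 1.
Proof. by rewrite /esign /sbit leqNgt => /negbTE ->. Qed.

Lemma esignK s k : esign s k * esign s k = 1.
Proof. by rewrite -signr_addb addbb. Qed.

Lemma esignD a b k : esign (a + b) k = esign a k * esign b k.
Proof. by rewrite /esign /sbit ffunE -signr_addb; case: (k < d)%N. Qed.

Lemma mpoly_sign (b : bool) : (-1) ^+ b = ((-1) ^+ b)%:MP :> P.
Proof. by rewrite rmorph_sign. Qed.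

Lemma Wact_mscale s f : Wact s f = mscale (wsign s) f.
Proof.
rewrite /Wact /mscale; congr comp_mpoly; apply: eq_mktuple => i.
rewrite /coordL /Wmat /wsign tr_diag_mx mul_mx_diag !mul_diag_mx !mxE.
case: ifP => [/eqP idn|ind].
  by rewrite idn eqxx (esign_out _ (leqnn d)) mulr1 esign_ord mpoly_sign mul_mpolyC.
have lt_i1d : (i.+1 < d)%N by rewrite ltn_neqAle ind ltn_ord.
rewrite sum_ord_eqn lt_i1d !mxE inordK // eqxx !mpoly_sign -!esign_ord.
by rewrite esign_inord // mulrAC -rmorphM mul_mpolyC.
Qed.

Lemma Wact0 s : Wact s 0 = 0 :> P.
Proof. by rewrite Wact_mscale mscale0. Qed.

Lemma WactB s : {morph @Wact F d s : f g / f - g}.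
Proof. by move=> f g; rewrite !Wact_mscale mscaleB. Qed.

Lemma WactM s : {morph @Wact F d s : f g / f * g}.
Proof. by move=> f g; rewrite !Wact_mscale mscaleM. Qed.

Lemma Wact_sum s I r (Q : pred I) (G : I -> P) :
  Wact s (\sum_(i <- r | Q i) G i) = \sum_(i <- r | Q i) Wact s (G i).
Proof. by rewrite Wact_mscale mscale_sum; under eq_bigr do rewrite -Wact_mscale. Qed.

Lemma WactX s i : Wact s 'X_i = wsign s i *: 'X_i.
Proof. by rewrite Wact_mscale mscaleX. Qed.

Lemma WactA a b f : Wact a (Wact b f) = Wact (a + b) f.
Proof.
rewrite !Wact_mscale mscale_comp; apply: eq_mscale => i.
by rewrite /wsign !esignD mulrACA.
Qed.

Lemma Wact_id f : Wact 0 f = f.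
Proof.
rewrite Wact_mscale -[RHS]mscale1; apply: eq_mscale => i.
by rewrite /wsign /esign /sbit !ffunE !andbF mulr1.
Qed.

Lemma WactK s : involutive (@Wact F d s).
Proof.
move=> f; rewrite WactA (_ : s + s = 0) ?Wact_id //.
by apply/ffunP => i; rewrite !ffunE; case: (s i).
Qed.

Lemma Wact_eq0 s f : (Wact s f == 0) = (f == 0).
Proof. by rewrite -[0 in LHS](Wact0 s) (can_eq (WactK s)). Qed.

Lemma wsign_flip (j i : 'I_d) : wsign [ffun k : 'I_d => (k <= j)%N] i = (-1) ^+ (i == j).
Proof.
have sbit_flip k : sbit [ffun k : 'I_d => (k <= j)%N] k = (k <= j)%N.
  rewrite /sbit ffunE; case: ltnP => [lt_kd|le_dk]; first by rewrite inordK.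
  by apply/esym/negbTE; rewrite -ltnNge (leq_trans (ltn_ord j)).
rewrite /wsign /esign !sbit_flip -signr_addb -(inj_eq val_inj) /=.
by case: ltngtP.
Qed.

Lemma msupp_Wact_fixed_even f m i : (2%:R : F) != 0 ->
  (forall s, Wact s f = f) -> m \in msupp f -> ~~ odd (m i).
Proof.
move=> two_neq0 fixf; apply: msupp_flip_fixed_even => //.
rewrite -[RHS](fixf [ffun k : 'I_d => (k <= i)%N]) Wact_mscale.
by apply: eq_mscale => k; rewrite wsign_flip.
Qed.

Lemma Wact_invariant_fraction (p q : P) : q != 0 ->
    (forall s, Wact s p * q = p * Wact s q) ->
  exists a b : P,
    [/\ b != 0, p * b = q * a, forall s, Wact s a = a & forall s, Wact s b = b].
Proof.
move=> q_neq0 pq_inv.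
set N' := \prod_(s : {ffun 'I_d -> bool} | s != 0) Wact s q.
set N := \prod_(s : {ffun 'I_d -> bool}) Wact s q.
have NE : N = q * N' by rewrite /N (bigD1 (0 : {ffun 'I_d -> bool})) //= Wact_id.
have N_inv s : Wact s N = N.
  rewrite Wact_mscale mscale_prod; under eq_bigr do rewrite -Wact_mscale WactA.
  by rewrite [RHS](reindex_inj (addrI s)).
exists (p * N'), N; split=> [||s|//].
- by apply/prodf_neq0 => s _; rewrite Wact_eq0.
- by rewrite NE mulrCA.
have Wq_neq0 : Wact s q * q != 0 by rewrite mulf_neq0 ?Wact_eq0.
apply: (mulIf Wq_neq0); rewrite mulrA -WactM mulrAC -mulrA -NE WactM N_inv.
by rewrite mulrAC pq_inv NE; ring.
Qed.

Local Notation wvec := (wvec F n).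

Lemma Wact_wvec s k (i : 'I_d) : Wact s (wvec k i 0) = esign s i *: wvec k i 0.
Proof.
elim: k i => [|k IH] i.
  rewrite /wvec /= /genv mxE; case: ifP => [/eqP idn|_]; last by rewrite Wact0 scaler0.
  by rewrite WactX /wsign idn (esign_out _ (leqnn d)) mulr1.
rewrite [wvec _]/= -/(wvec k) genM_mulmx WactB scalerBr; congr (_ - _).
  case: ifP => [lt_i1d|_]; last by rewrite Wact0 scaler0.
  rewrite WactM WactX IH -scalerAl -scalerAr scalerA /wsign esign_inord //.
  by rewrite -mulrA esignK mulr1.
case: ifP => [i_gt0|_]; last by rewrite Wact0 scaler0.
have lt_i1d : (i.-1 < d)%N := leq_ltn_trans (leq_pred i) (ltn_ord i).
rewrite WactM WactX IH -scalerAl -scalerAr scalerA /wsign esign_inord // inordK //.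
by rewrite prednK // mulrC mulrA esignK mul1r.
Qed.

Lemma Wact_wvec_sqr s k (i : 'I_d) : Wact s (wvec k i 0 ^+ 2) = wvec k i 0 ^+ 2.
Proof.
rewrite expr2 WactM Wact_wvec.
by rewrite -scalerAl -scalerAr scalerA esignK scale1r.
Qed.

Lemma Wact_genpoly s k : Wact s (genpoly F d k) = genpoly F d k.
Proof.
by rewrite genpoly_wvec Wact_sum; apply: eq_bigr => i _; rewrite Wact_wvec_sqr.
Qed.

End SignAction.

Section FieldOfInvariants.
Variables (F : idomainType) (n : nat).
Hypothesis two_neq0 : (2%:R : F) != 0.
Local Notation d := n.+1.
Local Notation P := {mpoly F[d]}.

Lemma genfield_Wact_invariant_vars t (f : P) :
  (forall s, Wact s f = f) -> mzero_below t f = f ->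
  (forall l : 'I_d, (t <= l)%N -> in_genfield ('X_l ^+ 2 : P)) -> in_genfield f.
Proof.
move=> fixW fixZ sq_ge; apply: genfield_even => m fm i.
  exact: (msupp_Wact_fixed_even i two_neq0 fixW fm).
move=> mi_gt0; apply: sq_ge; rewrite leqNgt; apply/negP => lt_it.
by move: mi_gt0; rewrite (msupp_mzero_below fixZ fm lt_it).
Qed.

Lemma genfield_Xsqr_step (t : 'I_d) :
  (forall l : 'I_d, (t < l)%N -> in_genfield ('X_l ^+ 2 : P)) -> in_genfield ('X_t ^+ 2 : P).
Proof.
move=> sq_gt; have tkn : (t + (n - t) = n)%N by rewrite subnKC // -ltnS.
set rest := \sum_(i < d | i != t) wvec F n (n - t) i 0 ^+ 2.
have rest_in : in_genfield rest.
  apply: (genfield_Wact_invariant_vars (t := t.+1)) => // [s|].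
    by rewrite Wact_sum; apply: eq_bigr => i _; rewrite Wact_wvec_sqr.
  rewrite mzero_below_sum; apply: eq_bigr => i ne_it.
  case: (ltngtP i t) => [lt_it|lt_ti|it].
  - by rewrite wvec_eq0 ?expr2 ?mul0r ?mzero_below0 //; lia.
  - by rewrite expr2 mzero_belowM wvec_vars_gt.
  - by move: ne_it; rewrite (val_inj it) eqxx.
set tail := \prod_(l < d | (t < l)%N) ('X_l ^+ 2 : P).
have tail_in : in_genfield tail.
  by apply: big_ind; [apply: genfield1 | apply: genfieldM | apply: sq_gt].
have tail_neq0 : tail != 0.
  by apply/prodf_neq0 => l _; rewrite expf_neq0 // mpolyXU_neq0.
have lt_kd : (n - t < d)%N by rewrite ltnS leq_subr.
apply: (genfield_div (f := genpoly F d (n - t) - rest) _ tail_in tail_neq0).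
  by apply: genfieldB => //; exact: (@genfield_genpoly F d (Ordinal lt_kd)).
rewrite genpoly_wvec (bigD1 t) //= addrK wvec_lead // -prodrXl (bigD1 t) //=.
congr (_ * _); apply: eq_bigl => l.
by rewrite ltn_neqAle andbC -(inj_eq val_inj) eq_sym.
Qed.

Lemma genfield_Xsqr (l : 'I_d) : in_genfield ('X_l ^+ 2 : P).
Proof.
suff: forall k (i : 'I_d), (n - i)%N = k -> in_genfield ('X_i ^+ 2 : P) by apply.
elim/ltn_ind => k IH i nik; apply: genfield_Xsqr_step => j lt_ij.
by apply: (IH (n - j)%N) => //; move: (ltn_ord j); lia.
Qed.

Lemma genfield_Wact_invariant (f : P) : (forall s, Wact s f = f) -> in_genfield f.
Proof.
move=> fixW; apply: genfield_even => m fm i.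
  exact: (msupp_Wact_fixed_even i two_neq0 fixW fm).
by move=> _; apply: genfield_Xsqr.
Qed.

End FieldOfInvariants.

Theorem lemma3p16 (R : realType) (d : nat) (hd : (2 <= d)%N) :
  (* the generators are W_d(C)-invariant *)
  (forall (s : {ffun 'I_d -> bool}) (k : 'I_d),
      Wact s (genpoly (complex R) d k) = genpoly (complex R) d k) /\
  (* every W_d(C)-invariant rational function p/q on L^(d-1) lies in the
     field generated by the generators: p/q = P(gens)/Q(gens) *)
  (forall p q : {mpoly (complex R)[d]}, q != 0 ->
     (forall s : {ffun 'I_d -> bool}, Wact s p * q = p * Wact s q) ->
     exists P Q : {mpoly (complex R)[d]},
       evalgens Q != 0 /\ p * evalgens Q = q * evalgens P).
Proof.
case: d hd => [//|n] _.
have two_neq0 : (2%:R : complex R) != 0 by rewrite Num.Theory.pnatr_eq0.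
split=> [s k|p q q_neq0 pq_inv]; first exact: Wact_genpoly.
have [a [b [b_neq0 pbqa a_inv b_inv]]] := Wact_invariant_fraction q_neq0 pq_inv.
by apply: (genfield_ratio _ _ b_neq0 pbqa); apply: genfield_Wact_invariant.
Qed.
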